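(* Let $1\le W<d<\infty$ be integers, let $a_{ij}\in\mathbb R$ ($1\le i\le d$, $1\le j\le W$) be arbitrary constants, and let $\Phi:\mathbb R^W\to\mathbb R^d$ be given by $\Phi_i(\mathbf w)=\sin\big(\sum_{j=1}^W a_{ij}w_j\big)$, $i=1,\ldots,d$. Then, regardless of the constants $a_{ij}$, the set $F_\Phi$ of GF-learnable targets has Lebesgue measure $0$ in $\mathbb R^d$.
   Context: For a target $\mathbf f\in\mathbb R^d$, let $L_{\mathbf f}(\mathbf w)=\frac12\|\mathbf f-\Phi(\mathbf w)\|^2$ and let $\mathbf w(t)$, $t\ge0$, be the solution of the gradient flow $\frac{d\mathbf w}{dt}=-\nabla_{\mathbf w}L_{\mathbf f}(\mathbf w(t))$ with $\mathbf w(0)=\mathbf 0$. The set of GF-learnable targets is $F_\Phi=\{\mathbf f\in\mathbb R^d:\inf_{t\ge0}L_{\mathbf f}(\mathbf w(t))=0\}$. *)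

From HB Require Import structures.
From mathcomp Require Import all_boot all_order all_algebra.
From mathcomp Require Import all_classical all_reals all_analysis.
Set Implicit Arguments. Unset Strict Implicit. Unset Printing Implicit Defensive.
Import Order.TTheory GRing.Theory Num.Theory.
Import numFieldNormedType.Exports.
Local Open Scope classical_set_scope.
Local Open Scope ring_scope.

Definition Phi_sin {R : realType} {d W : nat} (a : 'M[R]_(d, W))
    (w : 'rV[R]_W) : 'rV[R]_d :=
  \row_(i < d) sin (\sum_(j < W) a i j * w ord0 j).

Definition sqnorm {R : realType} {d : nat} (v : 'rV[R]_d) : R :=
  \sum_(i < d) v ord0 i ^+ 2.

Definition loss {R : realType} {d W : nat} (Phi : 'rV[R]_W -> 'rV[R]_d)
    (f : 'rV[R]_d) (w : 'rV[R]_W) : R :=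
  2^-1 * sqnorm (f - Phi w).

Definition grad {R : realType} {W : nat} (L : 'rV[R]_W -> R) (w : 'rV[R]_W)
  : 'rV[R]_W :=
  \row_(k < W) ('D_(delta_mx ord0 k) L w).

Definition GF_solution {R : realType} {d W : nat}
    (Phi : 'rV[R]_W -> 'rV[R]_d) (f : 'rV[R]_d) (w : R -> 'rV[R]_W) : Prop :=
  w 0 = 0 /\
  {within [set t : R | 0 <= t], continuous w} /\
  (forall t : R, 0 < t -> is_derive t 1 w (- grad (loss Phi f) (w t))).

Definition GF_learnable {R : realType} {d W : nat}
    (Phi : 'rV[R]_W -> 'rV[R]_d) : set 'rV[R]_d :=
  [set f | exists w : R -> 'rV[R]_W, GF_solution Phi f w /\
      inf [set loss Phi f (w t) | t in [set t : R | 0 <= t]] = 0].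

(* Lebesgue null set in R^d: for every eps > 0 it is covered by countably
   many closed boxes [lo n, hi n] of total volume < eps. *)
Definition box {R : realType} {d : nat} (lo hi : 'rV[R]_d) : set 'rV[R]_d :=
  [set x | forall i : 'I_d, lo ord0 i <= x ord0 i <= hi ord0 i].

Definition box_vol {R : realType} {d : nat} (lo hi : 'rV[R]_d) : R :=
  \prod_(i < d) (hi ord0 i - lo ord0 i).

Definition lebesgue_null {R : realType} {d : nat} (A : set 'rV[R]_d) : Prop :=
  forall eps : R, 0 < eps ->
    exists lo hi : nat -> 'rV[R]_d,
      (forall n (i : 'I_d), lo n ord0 i <= hi n ord0 i) /\
      A `<=` \bigcup_n box (lo n) (hi n) /\
      (forall N, \sum_(n < N) box_vol (lo n) (hi n) <= eps).

From HB Require Import structures.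
From mathcomp Require Import all_boot all_order all_algebra.
From mathcomp Require Import all_classical all_reals all_analysis.
From mathcomp Require Import ring lra.
Set Implicit Arguments. Unset Strict Implicit. Unset Printing Implicit Defensive.
Import Order.TTheory GRing.Theory Num.Theory.
Import numFieldNormedType.Exports.
Local Open Scope classical_set_scope.
Local Open Scope ring_scope.

(* Along the gradient flow the loss never increases, so once it is below 1/2 every
   residual f_i - sin u_i(t) stays in (-1, 1), where u(t) = a w(t).  A point y0 with
   |f_i - sin y0| >= 1 recurs with period 2 pi, and u_i(t) cannot cross its copies,
   so the pre-activations stay bounded; via the pseudo-inverse of a^T they are then
   produced by weights in a bounded cube [-B, B]^W.  Hence a learnable target lies
   in the closure of Phi([-B, B]^W) for some B.  As Phi is Lipschitz, splitting the
   cube into K^W cells of side 2B/K covers this closure by K^W cubes of side O(1/K)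
   in R^d, of total volume O(K^(W - d)) <= O(1/K) because W < d. *)

Lemma ler_sum_uniq_subset {R : numDomainType} (I : eqType) (s s' : seq I) (F : I -> R) :
  uniq s -> uniq s' -> {subset s <= s'} -> (forall i, 0 <= F i) ->
  \sum_(i <- s) F i <= \sum_(i <- s') F i.
Proof.
move=> s_uniq s'_uniq ss' F_ge0.
have s's : perm_eq [seq i <- s' | i \in s] s.
  apply: uniq_perm; rewrite ?filter_uniq // => i.
  by rewrite mem_filter andb_idr //; apply: ss'.
rewrite -(perm_big _ s's) big_filter [X in _ <= X](bigID (fun i => i \in s)) /=.
by rewrite lerDl sumr_ge0.
Qed.

Section lebesgue_null.
Context {R : realType} {d : nat}.
Implicit Types A : set 'rV[R]_d.

Lemma lebesgue_null_subset A B : A `<=` B -> lebesgue_null B -> lebesgue_null A.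
Proof.
move=> AB nullB eps eps_gt0; have [lo [hi [lo_hi [B_sub vol_le]]]] := nullB eps eps_gt0.
by exists lo, hi; split => //; split => //; apply: subset_trans B_sub.
Qed.

Lemma box_vol_cst (lo hi : 'rV[R]_d) (c : R) :
  (forall i, hi ord0 i - lo ord0 i = c) -> box_vol lo hi = c ^+ d.
Proof.
by move=> hi_lo; rewrite /box_vol (eq_bigr (fun=> c)) ?prodr_const ?card_ord.
Qed.

Lemma box_vol_ge0 (lo hi : 'rV[R]_d) :
  (forall i, lo ord0 i <= hi ord0 i) -> 0 <= box_vol lo hi.
Proof. by move=> lo_hi; apply: prodr_ge0 => i _; rewrite subr_ge0. Qed.

Hypothesis d_gt0 : (0 < d)%N.

Lemma box_vol_point (x : 'rV[R]_d) : box_vol x x = 0.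
Proof. by rewrite (@box_vol_cst _ _ 0) ?expr0n ?gtn_eqF // => i; rewrite subrr. Qed.

Lemma lebesgue_null_countable_cover A :
  (forall eps, 0 < eps -> exists (I : countType) (lo hi : I -> 'rV[R]_d),
    [/\ forall k i, lo k ord0 i <= hi k ord0 i,
        A `<=` \bigcup_k box (lo k) (hi k) &
        forall s : seq I, uniq s -> \sum_(k <- s) box_vol (lo k) (hi k) <= eps]) ->
  lebesgue_null A.
Proof.
move=> cover eps eps_gt0; have [I [lo [hi [lo_hi A_sub vol_le]]]] := cover eps eps_gt0.
(* Indices outside the range of [pickle] get the box [0, 0], null because d > 0. *)
pose lo' n := oapp lo 0 (pickle_inv n); pose hi' n := oapp hi 0 (pickle_inv n).
exists lo', hi'; split; [|split].
- by move=> n i; rewrite /lo' /hi'; case: pickle_inv => [k|] //=; rewrite mxE.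
- by move=> x /A_sub[k _ xk]; exists (pickle k) => //; rewrite /lo' /hi' pickleK_inv.
- move=> N; rewrite -(big_mkord xpredT (fun n => box_vol (lo' n) (hi' n))).
  rewrite (eq_bigr (fun n => oapp (fun k => box_vol (lo k) (hi k)) 0 (pickle_inv n))).
    by rewrite -big_pmap vol_le // (pmap_uniq (@pickle_invK I)) ?iota_uniq.
  by move=> n _; rewrite /lo' /hi'; case: pickle_inv => //=; rewrite box_vol_point.
Qed.

Lemma lebesgue_null_finite_cover A :
  (forall eps, 0 < eps -> exists (I : finType) (lo hi : I -> 'rV[R]_d),
    [/\ forall k i, lo k ord0 i <= hi k ord0 i,
        A `<=` \bigcup_k box (lo k) (hi k) &
        \sum_k box_vol (lo k) (hi k) <= eps]) ->
  lebesgue_null A.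
Proof.
move=> cover; apply: lebesgue_null_countable_cover => eps /cover[I [lo [hi [lo_hi A_sub vol_le]]]].
exists I, lo, hi; split => // s s_uniq; apply: le_trans vol_le.
apply: ler_sum_uniq_subset; rewrite ?index_enum_uniq // => k.
- by rewrite mem_index_enum.
- exact: box_vol_ge0.
Qed.

Lemma lebesgue_null_bigcup (A : nat -> set 'rV[R]_d) :
  (forall n, lebesgue_null (A n)) -> lebesgue_null (\bigcup_n A n).
Proof.
move=> nullA; apply: lebesgue_null_countable_cover => eps eps_gt0.
pose e := geometric (eps / 2) 2^-1.
have e_gt0 n : 0 < e n by rewrite /e /= mulr_gt0 ?exprn_gt0 ?divr_gt0.
have /choice[cov cov_spec] n : exists c : (nat -> 'rV[R]_d) * (nat -> 'rV[R]_d),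
    [/\ forall m i, c.1 m ord0 i <= c.2 m ord0 i,
        A n `<=` \bigcup_m box (c.1 m) (c.2 m) &
        forall N, \sum_(m < N) box_vol (c.1 m) (c.2 m) <= e n].
  by have [lo [hi [lo_hi [A_sub vol_le]]]] := nullA n _ (e_gt0 n); exists (lo, hi).
exists (nat * nat)%type, (fun p => (cov p.1).1 p.2), (fun p => (cov p.1).2 p.2); split.
- by move=> [n m] i; have [] := cov_spec n.
- move=> x [n _ Anx]; have [_ /(_ x Anx)[m _ xm] _] := cov_spec n.
  by exists (n, m).
- move=> s s_uniq; pose M := (\max_(p <- s) maxn p.1 p.2).+1.
  pose grid := [seq (n, m) | n <- index_iota 0 M, m <- index_iota 0 M].
  have s_grid : {subset s <= grid}.
    move=> [n m] nm_s; have := @leq_bigmax_seq _ s xpredT (fun p => maxn p.1 p.2) _ nm_s isT.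
    by rewrite geq_max => /andP[n_le m_le]; apply: allpairs_f; rewrite mem_index_iota ltnS.
  apply: le_trans (ler_sum_uniq_subset s_uniq _ s_grid _) _.
  - by apply: allpairs_uniq; rewrite ?iota_uniq // => -[? ?] [? ?] _ _ [-> ->].
  - by move=> [n m]; have [lo_hi _ _] := cov_spec n; apply: box_vol_ge0.
  rewrite big_allpairs; apply: le_trans (_ : \sum_(0 <= n < M) e n <= _).
    by apply: ler_sum => n _; have [_ _] := cov_spec n; rewrite big_mkord.
  have := geometric_le_lim M (a := eps / 2) (x := 2^-1).
  rewrite seriesEnat /= (_ : eps / 2 / (1 - 2^-1) = eps); last by field.
  apply; rewrite ?divr_ge0 ?invr_gt0 ?ltW //.
  by rewrite ger0_norm ?invf_lt1 ?ltr1n.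
Qed.

End lebesgue_null.

Definition image_cube_closure {R : realType} {W d : nat}
    (g : 'rV[R]_W -> 'rV[R]_d) (B : R) : set 'rV[R]_d :=
  [set f | forall eta, 0 < eta -> exists2 x : 'rV[R]_W,
     (forall j, `|x ord0 j| <= B) & (forall i, `|g x ord0 i - f ord0 i| < eta)].

Definition sup_lipschitz {R : realType} {W d : nat} (C : R) (g : 'rV[R]_W -> 'rV[R]_d) :=
  forall (x z : 'rV[R]_W) (h : R), 0 <= h -> (forall j, `|x ord0 j - z ord0 j| <= h) ->
  forall i, `|g x ord0 i - g z ord0 i| <= C * h.

Section grid.
Context {R : realType}.

Lemma exists_ord_near (K : nat) (z : R) :
  (0 < K)%N -> 0 <= z <= K%:R -> exists m : 'I_K, m%:R <= z <= m%:R + 1.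
Proof.
move=> K_gt0 /andP[z_ge0 z_le].
have m_lt : (minn (Num.truncn z) K.-1 < K)%N by rewrite gtn_min prednK // leqnn orbT.
exists (Ordinal m_lt) => /=; have /andP[tr_le lt_tr] := truncn_itv z_ge0.
have [tr_lt|tr_ge] := ltnP (Num.truncn z) K.-1.
  by rewrite tr_le natr1 ltW.
apply/andP; split.
  by apply: le_trans tr_le; rewrite ler_nat.
by rewrite natr1 prednK.
Qed.

Lemma grid_point_near (B : R) (K : nat) (y : R) :
  0 < B -> (0 < K)%N -> `|y| <= B ->
  exists m : 'I_K, `|y - (- B + 2 * B / K%:R * m%:R)| <= 2 * B / K%:R.
Proof.
move=> B_gt0 K_gt0; rewrite ler_norml => /andP[yl yr].
set h := 2 * B / K%:R.
have h_gt0 : 0 < h by rewrite divr_gt0 ?ltr0n // mulr_gt0.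
have hK : h * K%:R = 2 * B by rewrite mulfVK // pnatr_eq0 -lt0n.
have [m /andP[m_le le_m]] : exists m : 'I_K, m%:R <= (y + B) / h <= m%:R + 1.
  apply: exists_ord_near => //; apply/andP; split.
    by rewrite divr_ge0 ?(ltW h_gt0) //; lra.
  by rewrite ler_pdivrMr // [K%:R * h]mulrC hK; lra.
exists m; move: m_le le_m; rewrite ler_pdivlMr // ler_pdivrMr // => m_le le_m.
by rewrite ler_norml; apply/andP; split; lra.
Qed.

Lemma grid_vol_le (q : R) (K W d : nat) : (W < d)%N -> (0 < K)%N -> 0 <= q ->
  K%:R ^+ W * (q / K%:R) ^+ d <= q ^+ d / K%:R.
Proof.
move=> Wd K_gt0 q_ge0; have K_gt0' : 0 < K%:R :> R by rewrite ltr0n.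
rewrite expr_div_n mulrCA ler_wpM2l ?exprn_ge0 // ler_pdivrMr ?exprn_gt0 //.
rewrite mulrC ler_pdivlMr // -exprSr -!natrX ler_nat.
exact: leq_pexp2l.
Qed.

End grid.

Lemma image_cube_closure_null {R : realType} {W d : nat} (g : 'rV[R]_W -> 'rV[R]_d) (C B : R) :
  (W < d)%N -> 0 <= C -> 0 < B -> sup_lipschitz C g ->
  lebesgue_null (image_cube_closure g B).
Proof.
move=> Wd C_ge0 B_gt0 g_lip.
apply: lebesgue_null_finite_cover => [|eps eps_gt0]; first exact: leq_ltn_trans Wd.
pose q := 2 * (2 * B * C + 1).
have q_ge0 : 0 <= q by rewrite mulr_ge0 ?addr_ge0 ?mulr_ge0 // ltW.
pose K := (Num.truncn (q ^+ d / eps)).+1.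
have K_gt0 : 0 < K%:R :> R by rewrite ltr0n.
(* A cell of side h maps within C h of the image of its corner, and 1/K absorbs the
   closure, so every box has side 2 r = q / K. *)
pose h := 2 * B / K%:R; pose r := C * h + K%:R^-1.
have h_ge0 : 0 <= h by rewrite divr_ge0 ?mulr_ge0 ?ltW.
have r_ge0 : 0 <= r by rewrite addr_ge0 ?mulr_ge0 // ltW.
pose corner (m : {ffun 'I_W -> 'I_K}) : 'rV[R]_W := \row_j (- B + h * (m j)%:R).
exists {ffun 'I_W -> 'I_K}, (fun m => \row_i (g (corner m) ord0 i - r)),
  (fun m => \row_i (g (corner m) ord0 i + r)); split.
- by move=> m i; rewrite !mxE; lra.
- move=> f /(_ K%:R^-1); rewrite invr_gt0 => /(_ K_gt0)[x x_cube x_close].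
  have /fin_all_exists[m x_near] j : exists m : 'I_K, `|x ord0 j - (- B + h * m%:R)| <= h.
    exact: grid_point_near.
  exists [ffun j => m j] => // i.
  have corner_near j : `|x ord0 j - corner [ffun j => m j] ord0 j| <= h.
    by rewrite !mxE ffunE.
  have := g_lip _ _ _ h_ge0 corner_near i; have := x_close i.
  rewrite !mxE ler_norml ltr_norml => /andP[? ?] /andP[? ?].
  by rewrite /r; apply/andP; split; lra.
- have vol_m m : box_vol (\row_i (g (corner m) ord0 i - r)) (\row_i (g (corner m) ord0 i + r))
      = (q / K%:R) ^+ d.
    apply: box_vol_cst => i; rewrite !mxE /r /h /q; field; lra.
  rewrite (eq_bigr _ (fun m _ => vol_m m)) sumr_const card_ffun !card_ord.
  rewrite -[_ *+ K ^ W]mulr_natl natrX.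
  apply: le_trans (grid_vol_le Wd (ltn0Sn _) q_ge0) _.
  rewrite ler_pdivrMr // mulrC -ler_pdivrMr //; exact/ltW/truncnS_gt.
Qed.

Lemma periodicz {U V : zmodType} (f : U -> V) (T : U) :
  periodic f T -> forall (k : int) a, f (a + T *~ k) = f a.
Proof.
move=> fT [n|n] a; first exact: periodicn.
rewrite NegzE mulrNz -[in RHS](subrK (T *~ n.+1) a).
exact/esym/periodicn.
Qed.

Section sine.
Context {R : realType}.

Lemma sin_lipschitz (x y : R) : `|sin x - sin y| <= `|x - y|.
Proof.
wlog xy : x y / x <= y.
  move=> sin_le; have [/sin_le //|/ltW yx] := leP x y.
  by rewrite distrC [`|x - y|]distrC sin_le.
have sin_cont : {within `[x, y], continuous (@sin R)}.
  exact/continuous_subspaceT/continuous_sin.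
rewrite distrC [`|x - y|]distrC.
have [c _ ->] := MVT_segment xy (fun c _ => is_derive_sin c) sin_cont.
by rewrite normrM ler_piMl ?cos_max.
Qed.

Lemma exists_sin_far (c : R) : exists y : R, 1 <= `|c - sin y|.
Proof.
have [c_ge0|c_lt0] := leP 0 c.
  by exists (- (pi / 2)); rewrite sinN sin_pihalf opprK ger0_norm; lra.
by exists (pi / 2); rewrite sin_pihalf ler0_norm; lra.
Qed.

Lemma continuous_avoid_between (h : R -> R) (T t lo hi : R) :
  T <= t -> {within `[T, t], continuous h} ->
  (forall s, s \in `[T, t] -> h s <> lo /\ h s <> hi) ->
  lo <= h T <= hi -> lo <= h t <= hi.
Proof.
move=> Tt h_cont h_avoid /andP[lo_hT hT_hi].
apply/andP; split; rewrite leNgt; apply/negP => ht.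
- have [s s_in hs] : exists2 s, s \in `[T, t] & h s = lo.
    by apply: IVT => //; rewrite ge_min le_max lo_hT (ltW ht) orbT.
  by have [] := h_avoid s s_in.
- have [s s_in hs] : exists2 s, s \in `[T, t] & h s = hi.
    by apply: IVT => //; rewrite ge_min le_max hT_hi (ltW ht) orbT.
  by have [] := h_avoid s s_in.
Qed.

Lemma sin_trapped (h : R -> R) (T c : R) :
  (forall t, T <= t -> {for t, continuous h}) ->
  (forall t, T <= t -> `|c - sin (h t)| < 1) ->
  forall t, T <= t -> `|h t| <= `|h T| + pi *+ 2.
Proof.
move=> h_cont h_close t Tt.
(* sin equals sin y0, at distance >= 1 from c, on y0 + 2 pi Z; h cannot reach the
   two such points around h T. *)
have [y0 y0_far] := exists_sin_far c.
pose P : R := pi *+ 2; have P_gt0 : 0 < P by rewrite mulrn_wgt0 ?pi_gt0.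
set k := Num.floor ((h T - y0) / P); pose lo := y0 + P *~ k.
have /andP[lo_le lt_lo] : lo <= h T < lo + P.
  have /andP[] := floor_itv ((h T - y0) / P); rewrite -/k.
  rewrite ler_pdivlMr // ltr_pdivrMr // intrD mulrDl mul1r /lo -[P *~ k]mulrzl.
  by move=> ? ?; apply/andP; split; lra.
have far_lo : 1 <= `|c - sin lo| by rewrite (periodicz (@sinD2pi R)).
have T_le s : s \in `[T, t] -> T <= s by rewrite in_itv => /andP[].
have /andP[] : lo <= h t <= lo + P.
  apply: (@continuous_avoid_between h T) => //.
  - apply: continuous_in_subspaceT => s; rewrite inE /= => /T_le; exact: h_cont.
  - move=> s /T_le /h_close h_s; split => h_s_eq; move: h_s; rewrite h_s_eq ltNge.
      by rewrite far_lo.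
    by rewrite sinD2pi far_lo.
  - by rewrite lo_le ltW.
rewrite -/P ler_norml => ? ?.
have := ler_norm (h T); have := ler_norm (- h T); rewrite normrN.
by move=> ? ?; apply/andP; split; lra.
Qed.

End sine.

Lemma Phi_sin_lipschitz {R : realType} {d W : nat} (a : 'M[R]_(d, W)) :
  sup_lipschitz (\sum_(i < d) \sum_(j < W) `|a i j|) (Phi_sin a).
Proof.
move=> x z h h_ge0 xz i; rewrite !mxE; apply: le_trans (sin_lipschitz _ _) _.
rewrite -sumrB; apply: le_trans (ler_norm_sum _ _ _) _.
apply: le_trans (_ : \sum_(j < W) `|a i j| * h <= _).
  by apply: ler_sum => j _; rewrite -mulrBr normrM ler_wpM2l.
rewrite -mulr_suml ler_wpM2r // (bigD1 i) //= lerDl.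
by apply: sumr_ge0 => k _; apply: sumr_ge0.
Qed.

Lemma is_derive_mx_coord {R : realFieldType} {m n : nat} (p : R -> 'M[R]_(m, n))
    (t : R) (dp : 'M[R]_(m, n)) i j :
  is_derive t 1 p dp -> is_derive t 1 (fun s => p s i j) (dp i j).
Proof.
move=> [dp_ex <-].
have dpij : derivable (fun s => p s i j) t 1 by move/derivable_mxP: dp_ex; apply.
by rewrite derive_mx // mxE; apply: derivableP.
Qed.

Lemma derive_along_line {R : numFieldType} {V W : normedModType R} (F : V -> W) (x v : V) :
  'D_v F x = 'D_1 (fun h : R => F (h *: v + x)) 0.
Proof.
rewrite /derive; set lhs := fun h => _; set rhs := fun h => _.
suff -> : lhs = rhs by [].
by apply/funext => h; rewrite /lhs /rhs /= addr0 scale0r add0r [_%:A]mulr1.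
Qed.

Lemma row_preimage_bounded {R : numFieldType} {m n : nat} (A : 'M[R]_(m, n))
    (y : 'rV[R]_m) (M : R) :
  0 <= M -> (forall j, `|(y *m A) ord0 j| <= M) ->
  exists2 x : 'rV[R]_m, x *m A = y *m A &
    forall i, `|x ord0 i| <= M * \sum_(j < n) \sum_(k < m) `|pinvmx A j k|.
Proof.
move=> M_ge0 yA_le; exists (y *m A *m pinvmx A); first exact/mulmxKpV/submxMl.
move=> i; rewrite mxE; apply: le_trans (ler_norm_sum _ _ _) _.
apply: le_trans (_ : \sum_(j < n) M * `|pinvmx A j i| <= _).
  by apply: ler_sum => j _; rewrite normrM ler_wpM2r.
rewrite -mulr_sumr ler_wpM2l //; apply: ler_sum => j _.
by rewrite (bigD1 i) //= lerDl sumr_ge0.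
Qed.

Section sin_model.
Context {R : realType} {d W : nat} (a : 'M[R]_(d, W)) (f : 'rV[R]_d).

Definition preact (x : 'rV[R]_W) (i : 'I_d) : R := \sum_(j < W) a i j * x ord0 j.

Lemma preact_mulmx x i : preact x i = (x *m a^T) ord0 i.
Proof. by rewrite mxE; apply: eq_bigr => j _; rewrite mxE mulrC. Qed.

Lemma Phi_sin_mulmx x y :
  x *m a^T = y *m a^T -> Phi_sin a x = Phi_sin a y.
Proof.
move=> xy; apply/rowP => i; rewrite !mxE -/(preact x i) -/(preact y i).
by rewrite !preact_mulmx xy.
Qed.

Lemma loss_sinE x :
  loss (Phi_sin a) f x = 2^-1 * \sum_(i < d) (f ord0 i - sin (preact x i)) ^+ 2.
Proof. by congr (_ * _); apply: eq_bigr => i _; rewrite !mxE. Qed.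

Lemma loss_sin_ge0 x : 0 <= loss (Phi_sin a) f x.
Proof. by rewrite loss_sinE mulr_ge0 ?invr_ge0 ?sumr_ge0 // => i _; apply: sqr_ge0. Qed.

Lemma loss_sin_small x (eta : R) : 0 < eta ->
  loss (Phi_sin a) f x < eta ^+ 2 / 2 -> forall i, `|Phi_sin a x ord0 i - f ord0 i| < eta.
Proof.
move=> eta_gt0 loss_lt i; rewrite mxE distrC -/(preact x i).
set r := f ord0 i - sin (preact x i).
have : r ^+ 2 <= 2 * loss (Phi_sin a) f x.
  rewrite loss_sinE mulrA mulfV ?pnatr_eq0 // mul1r (bigD1 i) //= lerDl.
  by apply: sumr_ge0 => k _; apply: sqr_ge0.
by move=> r_sq; rewrite ltr_norml; apply/andP; split; nra.
Qed.

Lemma is_derive_preact (p : R -> 'rV[R]_W) (t : R) (dp : 'rV[R]_W) i :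
  (forall j, is_derive t 1 (fun s => p s ord0 j) (dp ord0 j)) ->
  is_derive t 1 (fun s => preact (p s) i) (preact dp i).
Proof.
move=> p_dp; rewrite /preact.
have := @is_derive_sum _ _ _ W (fun j s => a i j * p s ord0 j) t 1 (fun j => a i j * dp ord0 j) _.
by rewrite fct_sumE; apply => j; apply: is_deriveZ.
Qed.

Lemma is_derive_loss_sin (p : R -> 'rV[R]_W) (t : R) (dp : 'rV[R]_W) :
  (forall j, is_derive t 1 (fun s => p s ord0 j) (dp ord0 j)) ->
  is_derive t 1 (fun s => loss (Phi_sin a) f (p s))
    (- \sum_(i < d) (f ord0 i - sin (preact (p t) i)) * cos (preact (p t) i) * preact dp i).
Proof.
move=> p_dp.
have res_dp i : is_derive t 1 (fun s => f ord0 i - sin (preact (p s) i))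
    (- (cos (preact (p t) i) * preact dp i)).
  have := is_deriveB (is_derive_cst (f ord0 i) t 1)
    (is_derive1_comp (is_derive_sin _) (is_derive_preact i p_dp)).
  by move/is_derive_eq; apply; rewrite sub0r.
have := is_deriveZ (2^-1) (is_derive_sum (fun i => is_deriveX 2 (res_dp i))).
have -> : (fun s => loss (Phi_sin a) f (p s)) =
    (fun s => 2^-1 * \sum_(i < d) (f ord0 i - sin (preact (p s) i)) ^+ 2).
  by apply/funext => s; rewrite loss_sinE.
rewrite fct_sumE => /is_derive_eq; apply; rewrite scaler_sumr -sumrN; apply: eq_bigr => i _.
by rewrite expr1 -![_ *: _]/(_ * _); field.
Qed.

Lemma preact_delta i k : preact (delta_mx ord0 k) i = a i k.
Proof.
rewrite /preact (bigD1 k) //= big1 => [|j /negbTE jk]; last by rewrite !mxE jk mulr0.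
by rewrite !mxE !eqxx mulr1 addr0.
Qed.

Lemma grad_loss_sin x k :
  grad (loss (Phi_sin a) f) x ord0 k =
  - \sum_(i < d) (f ord0 i - sin (preact x i)) * cos (preact x i) * a i k.
Proof.
rewrite mxE; set v := delta_mx ord0 k.
have line_dp j : is_derive (0 : R) 1 (fun h : R => (h *: v + x) ord0 j) (v ord0 j).
  rewrite (_ : (fun h => _) = fun h : R => h * v ord0 j + x ord0 j); last first.
    by apply/funext => h; rewrite !mxE.
  by apply: is_derive_eq; rewrite scaler0 add0r addr0 [_%:A]mulr1.
rewrite /= derive_along_line (derive_val (is_derive := is_derive_loss_sin line_dp)).
rewrite scale0r add0r; congr (- _); apply: eq_bigr => i _.
by congr (_ * _); exact: preact_delta.
Qed.

Lemma is_derive_loss_sin_grad (p : R -> 'rV[R]_W) (t : R) (dp : 'rV[R]_W) :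
  (forall j, is_derive t 1 (fun s => p s ord0 j) (dp ord0 j)) ->
  is_derive t 1 (fun s => loss (Phi_sin a) f (p s))
    (\sum_(k < W) grad (loss (Phi_sin a) f) (p t) ord0 k * dp ord0 k).
Proof.
move=> /is_derive_loss_sin /is_derive_eq; apply.
under [RHS]eq_bigr do rewrite grad_loss_sin mulNr mulr_suml.
rewrite sumrN exchange_big; congr (- _); apply: eq_bigr => i _.
by rewrite /preact mulr_sumr; apply: eq_bigr => k _; rewrite mulrA.
Qed.

Lemma loss_sin_gradient_flow_nonincreasing (w : R -> 'rV[R]_W) :
  (forall t : R, 0 < t -> is_derive t 1 w (- grad (loss (Phi_sin a) f) (w t))) ->
  forall s t : R, 0 < s -> s <= t -> loss (Phi_sin a) f (w t) <= loss (Phi_sin a) f (w s).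
Proof.
move=> w_gf s t s_gt0 st.
pose L t := loss (Phi_sin a) f (w t).
have L_dec (u : R) : 0 < u -> exists2 D, is_derive u 1 L D & D <= 0.
  move=> u_gt0; set g := grad (loss (Phi_sin a) f) (w u).
  have w_dw j : is_derive u 1 (fun s => w s ord0 j) ((- g) ord0 j).
    exact: is_derive_mx_coord ord0 j (w_gf u u_gt0).
  exists (- \sum_(k < W) g ord0 k ^+ 2 : R).
    apply: is_derive_eq (is_derive_loss_sin_grad w_dw) _.
    by rewrite -sumrN; apply: eq_bigr => k _; rewrite -/g [(- g) _ _]mxE mulrN expr2.
  by rewrite oppr_le0; apply: sumr_ge0 => k _; apply: sqr_ge0.
have L_cont (u : R) : 0 < u -> {for u, continuous L}.
  move=> /L_dec[D [dL _] _]; exact/differentiable_continuous/derivable1_diffP.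
apply: (@ler0_derive1_le_oo R L 0 (t + 1)) => //; rewrite ?in_itv /=; try lra.
- by move=> u /andP[/L_dec[D [] ]].
- by move=> u /andP[/L_dec[D dL D_le0 _]]; rewrite derive1E (derive_val (is_derive := dL)).
- by move=> u; rewrite inE /= in_itv /= => /andP[/L_cont].
Qed.

Lemma gradient_flow_preact_bounded (w : R -> 'rV[R]_W) (T : R) :
  (forall t : R, 0 < t -> is_derive t 1 w (- grad (loss (Phi_sin a) f) (w t))) ->
  0 < T -> loss (Phi_sin a) f (w T) < 2^-1 ->
  forall t i, T <= t -> `|preact (w t) i| <= `|preact (w T) i| + pi *+ 2.
Proof.
move=> w_gf T_gt0 LT_lt t i.
apply: (@sin_trapped _ (fun s => preact (w s) i) T (f ord0 i)) => // s Ts.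
- have /w_gf w_dw := lt_le_trans T_gt0 Ts.
  have [preact_ex _] := is_derive_preact i (fun j => is_derive_mx_coord ord0 j w_dw).
  exact/differentiable_continuous/derivable1_diffP.
- rewrite distrC; have := loss_sin_small (x := w s) ltr01 _ i; rewrite mxE; apply.
  rewrite expr1n div1r; apply: le_lt_trans LT_lt.
  exact: loss_sin_gradient_flow_nonincreasing w_gf _ _ T_gt0 Ts.
Qed.

End sin_model.

Lemma inf_image_eq0_lt {R : realType} (A : set R) (g : R -> R) :
  A !=set0 -> (forall t, A t -> 0 <= g t) -> inf (g @` A) = 0 ->
  forall e, 0 < e -> exists2 t, A t & g t < e.
Proof.
move=> [t0 At0] g_ge0 inf0 e e_gt0.
have g_inf : has_inf (g @` A).
  by split; [exists (g t0), t0 | exists 0 => _ [t At <-]; apply: g_ge0].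
have [_ [t At <-]] := inf_adherent e_gt0 g_inf.
by rewrite inf0 add0r; exists t.
Qed.

Lemma GF_learnable_sin_sub {R : realType} {d W : nat} (a : 'M[R]_(d, W)) :
  GF_learnable (Phi_sin a) `<=` \bigcup_(n : nat) image_cube_closure (Phi_sin a) n.+1%:R.
Proof.
move=> f [w [[w0 [_ w_gf]] inf_L]].
pose L t := loss (Phi_sin a) f (w t).
have L_small := inf_image_eq0_lt (A := [set t : R | 0 <= t]) (g := L)
  (ex_intro _ 0 (lexx 0)) (fun t _ => loss_sin_ge0 a f (w t)) inf_L.
have sq_gt0 (eta : R) : 0 < eta -> 0 < eta ^+ 2 / 2 by move=> ?; rewrite divr_gt0 ?exprn_gt0.
(* The loss is only known to decrease for t > 0, so t = 0 is treated apart. *)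
have [L0_gt0|L0_le0] := ltP 0 (L 0); last first.
  exists 0%N => // eta eta_gt0; exists 0 => [j|]; first by rewrite mxE normr0.
  by rewrite -w0; apply: loss_sin_small => //; apply: le_lt_trans L0_le0 (sq_gt0 _ eta_gt0).
have late_small e : 0 < e -> exists2 t, 0 < t & L t < e.
  move=> e_gt0; have [|t t_ge0] := L_small (Num.min e (L 0)); first by rewrite lt_min e_gt0.
  rewrite lt_min => /andP[Lt_e Lt_L0]; exists t => //.
  by rewrite lt_def t_ge0 andbT; apply: contraTneq Lt_L0 => ->; rewrite ltxx.
have [|T T_gt0 LT] := late_small 2^-1; first by rewrite invr_gt0.
pose M := \sum_i (`|preact a (w T) i| + pi *+ 2).
have pi2_ge0 : 0 <= pi *+ 2 :> R by rewrite mulrn_wge0 // pi_ge0.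
have M_ge0 : 0 <= M by apply: sumr_ge0 => i _; rewrite addr_ge0.
have preact_le t i : T <= t -> `|preact a (w t) i| <= M.
  move=> Tt; apply: le_trans (gradient_flow_preact_bounded w_gf T_gt0 LT i Tt) _.
  rewrite /M (bigD1 i) //= lerDl; apply: sumr_ge0 => k _.
  by rewrite addr_ge0.
exists (Num.truncn (M * \sum_(j < d) \sum_(i < W) `|pinvmx a^T j i|)) => // eta eta_gt0.
have [t t_gt0 Lt] := late_small _ (sq_gt0 _ eta_gt0).
have Tt_ge : T <= Num.max T t /\ t <= Num.max T t by rewrite !le_max !lexx orbT.
have [|x xa x_le] := row_preimage_bounded (A := a^T) (y := w (Num.max T t)) M_ge0.
  by move=> i; rewrite -preact_mulmx; apply: preact_le; case: Tt_ge.
exists x => [j|i]; first exact: le_trans (x_le j) (ltW (truncnS_gt _)).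
rewrite (Phi_sin_mulmx xa); apply: loss_sin_small => //; apply: le_lt_trans Lt.
by apply: loss_sin_gradient_flow_nonincreasing w_gf _ _ t_gt0 _; case: Tt_ge.
Qed.

Theorem corollary2 (R : realType) (W d : nat) (hW : (1 <= W)%N) (hWd : (W < d)%N)
    (a : 'M[R]_(d, W)) :
  lebesgue_null (GF_learnable (Phi_sin a)).
Proof.
apply: lebesgue_null_subset (GF_learnable_sin_sub (a := a)) _.
apply: lebesgue_null_bigcup => [|n]; first exact: leq_ltn_trans hWd.
apply: image_cube_closure_null hWd _ _ (Phi_sin_lipschitz a) => //.
by apply: sumr_ge0 => i _; apply: sumr_ge0.
Qed.
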